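(* Let $R\subseteq S$ be integral domains and let $\mathbf A$ be a matrix with entries in $R$. Then $\mathbf A$ satisfies the columns condition as a matrix with entries in $R$ if and only if it satisfies the columns condition as a matrix with entries in $S$.
   Context: Columns condition: for a $k\times l$ matrix over a domain $D$ with fraction field $K$ and columns $\mathbf c_1,\dots,\mathbf c_l\in D^k$, it holds if there exist an integer $m\ge0$ and a partition $\{1,\dots,l\}=I_0\cup\dots\cup I_m$ such that $\sum_{i\in I_0}\mathbf c_i=0$ and for each $t\in\{1,\dots,m\}$, $\sum_{i\in I_t}\mathbf c_i$ lies in the $K$-vector space spanned by the $\mathbf c_j$ with $j\in I_0\cup\dots\cup I_{t-1}$. *)

From HB Require Import structures.
From mathcomp Require Import all_boot all_order all_algebra.
Set Implicit Arguments. Unset Strict Implicit. Unset Printing Implicit Defensive.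
Import Order.TTheory GRing.Theory Num.Theory.
Local Open Scope ring_scope.

(* The partition {1..l} = I_0 u ... u I_m is given by a block-index map
   p : 'I_l -> 'I_(m.+1); I_t = [set i | p i == t]. *)
Definition columns_condition (D : idomainType) (k l : nat) (A : 'M[D]_(k, l)) : Prop :=
  exists (m : nat) (p : 'I_l -> 'I_m.+1),
    (\sum_(i < l | p i == ord0) col i A = 0) /\
    (forall t : 'I_m.+1, t != ord0 ->
       exists a : 'I_l -> {fraction D},
         map_mx (@FracField.tofrac D) (\sum_(i < l | p i == t) col i A)
         = \sum_(j < l | (p j < t)%N) a j *: map_mx (@FracField.tofrac D) (col j A)).

From HB Require Import structures.
From mathcomp Require Import all_boot all_order all_algebra.
From Corelib Require Import Setoid.

(* Vanishing of a sum of columns is reflected because f is injective.  The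
   span condition lives in the fraction fields: an injective ring morphism
   R -> S extends to a field morphism {fraction R} -> {fraction S}, and
   membership of a vector in the span of given vectors is a row-space
   inclusion, which field morphisms preserve and reflect (map_submx). *)
Set Implicit Arguments.
Unset Strict Implicit.
Unset Printing Implicit Defensive.

Import GRing.Theory.
Local Open Scope ring_scope.

Local Notation "x %:F" := (@FracField.tofrac _ x).

Lemma tofrac_reprE (R : idomainType) (x : {fraction R}) :
  x = (repr x).1%:F / (repr x).2%:F.
Proof.
rewrite -[x in LHS]reprK; case: (repr x) => -[n d] /= d0.
unlock FracField.tofrac; rewrite /GRing.inv /GRing.mul /= !piE.
rewrite /FracField.mulf /FracField.invf /= !numden_Ratio ?oner_neq0 //.
apply/eqmodP; rewrite /= FracField.equivfE /= !numden_Ratio ?mul1r ?oner_neq0 //.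
by rewrite mulr1 mulrC.
Qed.

Section FracLift.
Variables (R : idomainType) (F : fieldType) (f : {rmorphism R -> F}).
Hypothesis f_inj : injective f.

Definition frac_lift of injective f :=
  fun x : {fraction R} => f (repr x).1 / f (repr x).2.
Local Notation lift := (frac_lift f_inj).

Lemma inj_rmorph_eq0 x : (f x == 0) = (x == 0).
Proof. by rewrite -(rmorph0 f) (inj_eq f_inj). Qed.

Lemma frac_lift_div n d : d != 0 -> lift (n%:F / d%:F) = f n / f d.
Proof.
move=> d0; rewrite /frac_lift; set r := repr _.
have r0 : r.2 != 0 := denom_ratioP r.
have /eqP : n%:F / d%:F = r.1%:F / r.2%:F by rewrite -tofrac_reprE.
rewrite eqr_div ?tofrac_eq0 // -!rmorphM tofrac_eq => /eqP cross.
by apply/eqP; rewrite eqr_div ?inj_rmorph_eq0 // -!rmorphM cross.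
Qed.

Lemma frac_lift_tofrac n : lift n%:F = f n.
Proof.
rewrite -[n%:F]divr1 -(rmorph1 (@FracField.tofrac R)).
by rewrite frac_lift_div ?oner_neq0 // rmorph1 divr1.
Qed.

Lemma frac_lift_is_zmod_morphism : zmod_morphism lift.
Proof.
move=> x y; rewrite [x]tofrac_reprE [y]tofrac_reprE.
case: (repr x) (repr y) => -[a b] /= b0 [[c e]] /= e0.
rewrite !frac_lift_div // -!mulNr -!rmorphN.
rewrite !addf_div ?tofrac_eq0 ?inj_rmorph_eq0 //.
rewrite -!rmorphM -rmorphD frac_lift_div ?mulf_neq0 //.
by rewrite rmorphD !rmorphM.
Qed.

Lemma frac_lift_is_monoid_morphism : monoid_morphism lift.
Proof.
split; first by rewrite -(rmorph1 (@FracField.tofrac R)) frac_lift_tofrac rmorph1.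
move=> x y; rewrite [x]tofrac_reprE [y]tofrac_reprE.
case: (repr x) (repr y) => -[a b] /= b0 [[c e]] /= e0.
rewrite !frac_lift_div // !mulf_div -!(rmorphM (@FracField.tofrac R)).
by rewrite frac_lift_div ?mulf_neq0 // !rmorphM.
Qed.

HB.instance Definition _ :=
  GRing.isZmodMorphism.Build _ _ lift frac_lift_is_zmod_morphism.
HB.instance Definition _ :=
  GRing.isMonoidMorphism.Build _ _ lift frac_lift_is_monoid_morphism.

End FracLift.

Lemma lincomb_submxP (F : fieldType) k l (P : pred 'I_l) (w : 'I_l -> 'cV[F]_k)
    (v : 'cV_k) :
  (exists a : 'I_l -> F, v = \sum_(j < l | P j) a j *: w j) <->
  (v^T <= \matrix_(j < l) (if P j then (w j)^T else 0))%MS.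
Proof.
set M := \matrix_j _.
have combE (u : 'rV_l) : u *m M = (\sum_(j < l | P j) u 0 j *: w j)^T.
  rewrite mulmx_sum_row linear_sum [RHS]big_mkcond; apply: eq_bigr => j _.
  by rewrite rowK; case: (P j); rewrite ?linearZ ?scaler0.
split=> [[a ->] | /submxP[u vE]].
  apply/submxP; exists (\row_j a j); rewrite combE.
  by congr _^T; apply: eq_bigr => j _; rewrite mxE.
by exists (u 0); rewrite -[v]trmxK vE combE trmxK.
Qed.

Lemma map_lincomb (F F' : fieldType) (g : {rmorphism F -> F'}) k l (P : pred 'I_l)
    (w : 'I_l -> 'cV[F]_k) (v : 'cV_k) :
  (exists a, map_mx g v = \sum_(j < l | P j) a j *: map_mx g (w j)) <->
  (exists a, v = \sum_(j < l | P j) a j *: w j).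
Proof.
rewrite !lincomb_submxP -[(v^T <= _)%MS](map_submx g) map_trmx.
suff -> : \matrix_j (if P j then (map_mx g (w j))^T else 0) =
          map_mx g (\matrix_j (if P j then (w j)^T else 0)) by [].
by apply/matrixP => j i; rewrite !mxE; case: (P j); rewrite ?mxE ?rmorph0.
Qed.

Lemma tofrac_inj (D : idomainType) : injective (@FracField.tofrac D).
Proof. by move=> x y /eqP; rewrite tofrac_eq => /eqP. Qed.

Lemma map_mx_inj_eq0 (U V : zmodType) (f : {additive U -> V}) m n (X : 'M[U]_(m, n)) :
  injective f -> (map_mx f X == 0) = (X == 0).
Proof.
move=> f_inj; apply/eqP/eqP => [/matrixP X0 | ->]; last exact: map_mx0.
by apply/matrixP => i j; apply: f_inj; move: (X0 i j); rewrite !mxE raddf0.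
Qed.

Section Transfer.
Variables (R S : idomainType) (f : {rmorphism R -> S}).
Hypothesis f_inj : injective f.
Variables (k l : nat) (A : 'M[R]_(k, l)).

Let embed : {rmorphism R -> {fraction S}} := @FracField.tofrac S \o f.
Let embed_inj : injective embed := inj_comp (@tofrac_inj S) f_inj.
Let phi : {rmorphism {fraction R} -> {fraction S}} := frac_lift embed_inj.

Lemma map_tofrac_map m n (X : 'M[R]_(m, n)) :
  map_mx (@FracField.tofrac S) (map_mx f X) =
  map_mx phi (map_mx (@FracField.tofrac R) X).
Proof. by apply/matrixP => i j; rewrite !mxE; symmetry; apply: frac_lift_tofrac. Qed.

Lemma sum_cols_map (P : pred 'I_l) :
  \sum_(i < l | P i) col i (map_mx f A) = map_mx f (\sum_(i < l | P i) col i A).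
Proof. by rewrite map_mx_sum; apply: eq_bigr => i _; rewrite map_col. Qed.

Lemma sum_cols_map_eq0 (P : pred 'I_l) :
  \sum_(i < l | P i) col i (map_mx f A) = 0 <-> \sum_(i < l | P i) col i A = 0.
Proof.
rewrite sum_cols_map; split=> [/eqP | ->]; last exact: map_mx0.
by rewrite map_mx_inj_eq0 // => /eqP.
Qed.

Lemma sum_cols_map_lincomb (P Q : pred 'I_l) :
  (exists a, map_mx (@FracField.tofrac S) (\sum_(i < l | P i) col i (map_mx f A)) =
     \sum_(j < l | Q j) a j *: map_mx (@FracField.tofrac S) (col j (map_mx f A))) <->
  (exists a, map_mx (@FracField.tofrac R) (\sum_(i < l | P i) col i A) =
     \sum_(j < l | Q j) a j *: map_mx (@FracField.tofrac R) (col j A)).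
Proof.
rewrite -(map_lincomb phi _ (fun j => map_mx (@FracField.tofrac R) (col j A))).
rewrite sum_cols_map map_tofrac_map.
by split=> -[a ->]; exists a; apply: eq_bigr => j _; rewrite -map_col map_tofrac_map.
Qed.

End Transfer.

Theorem lemma3p1 (R S : idomainType) (f : {rmorphism R -> S}) (f_inj : injective f)
  (k l : nat) (A : 'M[R]_(k, l)) :
  columns_condition A <-> columns_condition (map_mx f A).
Proof.
split=> -[m [p [block0 blocks]]]; exists m, p; split.
- exact/(sum_cols_map_eq0 f_inj).
- by move=> t /blocks /(sum_cols_map_lincomb f_inj).
- exact/(sum_cols_map_eq0 f_inj).
- by move=> t /blocks /(sum_cols_map_lincomb f_inj).
Qed.
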